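(* Let $A$ be a $d$-dimensional polystochastic matrix of order $n$ and $1\le k\le d-1$. Then $\operatorname{per}A>0$ if and only if there exist $n$ pairwise diagonally located parallel $k$-dimensional planes $\Gamma_1,\dots,\Gamma_n$ of $A$ such that the $(k+1)$-dimensional matrix $(\Gamma_1,\dots,\Gamma_n)$ has positive permanent. Equivalently, $\operatorname{per}A=0$ if and only if $\operatorname{per}(\Gamma_1,\dots,\Gamma_n)=0$ for all families of $n$ pairwise diagonally located parallel $k$-dimensional planes $\Gamma_1,\dots,\Gamma_n$ of $A$.
   Context: A $d$-dimensional matrix of order $n$ is an array $A=(a_\alpha)_{\alpha\in I_n^d}$, $I_n^d=\{0,\dots,n-1\}^d$. A $k$-dimensional plane of direction $(i_1,\dots,i_{d-k})$ is obtained by fixing coordinates $i_1,\dots,i_{d-k}$ to values $(\beta_1,\dots,\beta_{d-k})$ and letting the other $k$ coordinates vary; it is a $k$-dimensional matrix of order $n$. Two planes are parallel if they have the same direction, and parallel planes with fixed values $(\beta_j)$ and $(\gamma_j)$ are diagonally located if $\beta_j\ne\gamma_j$ for all $j$. For parallel $k$-dimensional planes $\Gamma_1,\dots,\Gamma_n$, $(\Gamma_1,\dots,\Gamma_n)$ denotes the $(k+1)$-dimensional matrix of order $n$ whose hyperplanes of the first direction are $\Gamma_1,\dots,\Gamma_n$ in this order. $A$ is polystochastic if it is nonnegative and each line (1-dimensional plane) sums to $1$. A diagonal is a set of $n$ indices any two of which differ in every coordinate; $\operatorname{per}A=\sum_p\prod_{\alpha\in p}a_\alpha$ over all diagonals $p$.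 *)

From mathcomp Require Import all_boot all_order all_algebra.
From mathcomp Require Import reals.
Set Implicit Arguments. Unset Strict Implicit. Unset Printing Implicit Defensive.
Import Order.TTheory GRing.Theory Num.Theory.
Local Open Scope ring_scope.

Definition idx (d n : nat) := {ffun 'I_d -> 'I_n}.

Definition mat (R : Type) (d n : nat) := idx d n -> R.

Definition upd (d n : nat) (alpha : idx d n) (i : 'I_d) (t : 'I_n) : idx d n :=
  [ffun j => if j == i then t else alpha j].

Definition polystochastic (R : realType) (d n : nat) (A : mat R d n) : Prop :=
  (forall alpha, 0 <= A alpha) /\
  (forall (i : 'I_d) (alpha : idx d n), \sum_(t < n) A (upd alpha i t) = 1).

Definition is_diagonal (d n : nat) (p : {set idx d n}) : bool :=
  (#|p| == n) &&
  [forall a in p, forall b in p, (a != b) ==> [forall i, a i != b i]].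

Definition per (R : realType) (d n : nat) (A : mat R d n) : R :=
  \sum_(p : {set idx d n} | is_diagonal p) \prod_(a in p) A a.

(* A family of n parallel planes of direction S (the set of fixed coordinates,
   of size d-k), plane j having fixed values beta j on S (values of beta j
   outside S are irrelevant). *)
Definition pairwise_diag_located (d n : nat) (S : {set 'I_d})
    (beta : 'I_n -> idx d n) : Prop :=
  forall j j' : 'I_n, j != j' -> forall i, i \in S -> beta j i != beta j' i.

(* The (k+1)-dimensional matrix (Gamma_1, ..., Gamma_n): the first coordinate
   selects the plane, the remaining k coordinates are the free coordinates
   (those outside S) listed in increasing order. *)
Definition stack (R : realType) (d n : nat) (k : nat) (A : mat R d n)
    (S : {set 'I_d}) (beta : 'I_n -> idx d n) : mat R k.+1 n :=
  fun gamma => A [ffun i : 'I_d => if i \in S then beta (gamma ord0) i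
                     else gamma (inord (index i (enum (~: S))).+1)].
Arguments stack {R d n} k A S beta _.

From mathcomp Require Import all_boot all_order all_algebra.
From mathcomp Require Import reals.
From mathcomp Require Import zify.
Set Implicit Arguments. Unset Strict Implicit. Unset Printing Implicit Defensive.
Import Order.TTheory GRing.Theory Num.Theory.
Local Open Scope ring_scope.

(* A diagonal of A with positive product lies in n parallel planes, one
   through each of its points with the fixed coordinates read off that point.
   Two distinct points of a diagonal differ in every coordinate, so these
   planes are pairwise diagonally located, and the diagonal reappears in their
   stack (the plane index becoming the first coordinate).  Conversely the map
   sending an index of the stack to the corresponding index of A sends every
   diagonal of the stack to a diagonal of A with the same entries. *)

Section Permanent.

Variables (R : realType) (d n : nat).
Implicit Types (M : mat R d n) (p : {set idx d n}).

Lemma prod_diagonal_le_per M p :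
  (forall x, 0 <= M x) -> is_diagonal p -> \prod_(a in p) M a <= per M.
Proof.
move=> M_ge0 p_diag; rewrite /per (bigD1 p) //= lerDl.
by apply: sumr_ge0 => q _; apply: prodr_ge0.
Qed.

Lemma per_ge0 M : (forall x, 0 <= M x) -> 0 <= per M.
Proof. by move=> M_ge0; apply: sumr_ge0 => p _; apply: prodr_ge0. Qed.

Lemma per_eq0_gt0 M : (forall x, 0 <= M x) -> per M = 0 <-> ~ 0 < per M.
Proof.
move=> M_ge0; rewrite lt_def per_ge0 // andbT.
by split=> [-> | /negP/negPn/eqP //]; rewrite eqxx.
Qed.

Lemma per_gt0P M : 0 < per M -> exists2 p, is_diagonal p & 0 < \prod_(a in p) M a.
Proof.
move=> per_gt0; apply/exists_inP; apply: contraTT per_gt0 => /exists_inPn neg.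
by rewrite -leNgt; apply: sumr_le0 => p /neg; rewrite -leNgt.
Qed.

Lemma diagonal_separates p : is_diagonal p ->
  {in p &, forall a b : idx d n, a != b -> forall i, a i != b i}.
Proof.
case/andP=> _ /forall_inP p_diag a b ap bp ab; apply/forallP.
exact: (implyP (forall_inP (p_diag a ap) b bp)).
Qed.

Definition separated (g : 'I_n -> idx d n) :=
  forall j j', j != j' -> forall i, g j i != g j' i.

Lemma diagonal_enum p : is_diagonal p ->
  exists2 g : 'I_n -> idx d n, separated g &
    forall (T : Type) (x : T) (op : Monoid.com_law x) (F : idx d n -> T),
      \big[op/x]_(a in p) F a = \big[op/x]_j F (g j).
Proof.
move=> p_diag; have /eqP card_p := (andP p_diag).1.
exists (fun j => enum_val (cast_ord (esym card_p) j)).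
  move=> j j' jj'; apply: (diagonal_separates p_diag (enum_valP _) (enum_valP _)).
  by apply: contra_neq jj' => /enum_val_inj /cast_ord_inj.
move=> T x op F; rewrite big_enum_val (reindex (cast_ord (esym card_p))) //.
by exists (cast_ord card_p) => i _; rewrite ?cast_ordK ?cast_ordKV.
Qed.

(* [i0] witnesses that there is a coordinate: without one, the points of a
   separated family could not be distinct. *)
Lemma per_gt0_separated (M : mat R d n) (g : 'I_n -> idx d n) (i0 : 'I_d) :
  (forall x, 0 <= M x) -> separated g -> 0 < \prod_j M (g j) -> 0 < per M.
Proof.
move=> M_ge0 g_sep prod_gt0.
have g_inj : injective g.
  move=> j j' gjj'; apply/eqP/negPn/negP => jj'.
  by have := g_sep j j' jj' i0; rewrite gjj' eqxx.
have g_diag : is_diagonal [set g j | j : 'I_n].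
  apply/andP; split; first by rewrite card_imset // card_ord.
  apply/forall_inP => _ /imsetP [j _ ->]; apply/forall_inP => _ /imsetP [j' _ ->].
  apply/implyP => gjj'; apply/forallP; apply: g_sep.
  by apply: contra_neq gjj' => ->.
apply: (lt_le_trans _ (prod_diagonal_le_per M_ge0 g_diag)).
by rewrite big_imset //; apply: in2W.
Qed.

End Permanent.

Section Stack.

Variables (R : realType) (d n k : nat) (S : {set 'I_d}) (beta : 'I_n -> idx d n).

Definition stack_idx (gamma : idx k.+1 n) : idx d n :=
  [ffun i : 'I_d => if i \in S then beta (gamma ord0) i
                    else gamma (inord (index i (enum (~: S))).+1)].

Lemma stackE (A : mat R d n) gamma : stack k A S beta gamma = A (stack_idx gamma).
Proof. by []. Qed.

Lemma stack_idx_separates (gamma gamma' : idx k.+1 n) :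
  pairwise_diag_located S beta -> (forall c, gamma c != gamma' c) ->
  forall i, stack_idx gamma i != stack_idx gamma' i.
Proof. by move=> located sep i; rewrite !ffunE; case: ifP => // /located; apply. Qed.

(* Inverse of [stack_idx] on the plane [j]: the first coordinate is the plane
   index, coordinate [c > 0] is the [c]-th free coordinate of [alpha]. *)
Definition plane_coords (i0 : 'I_d) (j : 'I_n) (alpha : idx d n) : idx k.+1 n :=
  [ffun c : 'I_k.+1 => if c == ord0 then j else alpha (nth i0 (enum (~: S)) c.-1)].

Lemma stack_idx_plane_coords i0 j (alpha : idx d n) :
  #|~: S| = k -> {in S, forall i, beta j i = alpha i} ->
  stack_idx (plane_coords i0 j alpha) = alpha.
Proof.
move=> card_free on_plane; apply/ffunP => i; rewrite !ffunE.
case: ifPn => [iS|iNS]; first by rewrite eqxx on_plane.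
have i_free : i \in enum (~: S) by rewrite mem_enum inE.
have lt_k : ((index i (enum (~: S))).+1 < k.+1)%N.
  by rewrite ltnS -card_free cardE index_mem.
by rewrite -val_eqE /= inordK // nth_index.
Qed.

End Stack.

Lemma per_stack_gt0 (R : realType) (d n k : nat) (A : mat R d n)
    (S : {set 'I_d}) (beta : 'I_n -> idx d n) :
  (0 < d)%N -> (forall x, 0 <= A x) -> pairwise_diag_located S beta ->
  0 < per (stack k A S beta) -> 0 < per A.
Proof.
move=> d_gt0 A_ge0 located /per_gt0P [q /diagonal_enum [g g_sep prodE]].
rewrite prodE => prod_gt0.
apply: (per_gt0_separated (g := stack_idx S beta \o g) (Ordinal d_gt0) A_ge0) => //.
by move=> j j' jj'; apply: stack_idx_separates located (g_sep j j' jj').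
Qed.

Lemma per_gt0_stack (R : realType) (d n k : nat) (A : mat R d n)
    (S : {set 'I_d}) (p : {set idx d n}) :
  (0 < d)%N -> (forall x, 0 <= A x) -> #|~: S| = k ->
  is_diagonal p -> 0 < \prod_(a in p) A a ->
  exists beta, pairwise_diag_located S beta /\ 0 < per (stack k A S beta).
Proof.
move=> d_gt0 A_ge0 card_free /diagonal_enum [g g_sep ->] prod_gt0.
exists g; split=> [j j' jj' i _ | ]; first exact: g_sep.
pose h j := plane_coords k S (Ordinal d_gt0) j (g j).
apply: (per_gt0_separated (g := h) ord0) => [x | j j' jj' c | ]; first exact: A_ge0.
  by rewrite !ffunE; case: ifP => // _; apply: g_sep.
by under eq_bigr => j _ do rewrite stackE stack_idx_plane_coords //.
Qed.

Lemma exists_set_card (T : finType) (m : nat) : (m <= #|T|)%N ->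
  exists S : {set T}, #|S| = m.
Proof.
move=> le_m; exists [set x in take m (enum T)].
have /card_uniqP uniq_card : uniq (take m (enum T)) by rewrite take_uniq ?enum_uniq.
by rewrite cardsE uniq_card size_takel // -cardT.
Qed.

Theorem mainTheorem5 (R : realType) (d n k : nat) (A : mat R d n)
  (hA : polystochastic A) (hk1 : (1 <= k)%N) (hk2 : (k <= d - 1)%N) :
  (0 < per A <->
     exists (S : {set 'I_d}) (beta : 'I_n -> idx d n),
       [/\ #|S| = (d - k)%N, pairwise_diag_located S beta
         & 0 < per (stack k A S beta)])
  /\
  (per A = 0 <->
     forall (S : {set 'I_d}) (beta : 'I_n -> idx d n),
       #|S| = (d - k)%N -> pairwise_diag_located S beta ->
       per (stack k A S beta) = 0).
Proof.
have [A_ge0 _] := hA.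
have d_gt0 : (0 < d)%N by lia.
have stack_ge0 S beta : forall x, 0 <= stack k A S beta x by move=> x; apply: A_ge0.
have pos_iff : 0 < per A <-> exists (S : {set 'I_d}) (beta : 'I_n -> idx d n),
    [/\ #|S| = (d - k)%N, pairwise_diag_located S beta & 0 < per (stack k A S beta)].
  split=> [|[S [beta [_ located]]]]; last exact: per_stack_gt0.
  case/per_gt0P => p p_diag prod_gt0.
  have [S card_S] : exists S : {set 'I_d}, #|S| = (d - k)%N.
    by apply: exists_set_card; rewrite card_ord leq_subr.
  have card_free : #|~: S| = k by have := cardsC S; rewrite card_ord card_S; lia.
  have [beta [located per_gt0]] := per_gt0_stack d_gt0 A_ge0 card_free p_diag prod_gt0.
  by exists S, beta.
split=> //; rewrite per_eq0_gt0 // pos_iff.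
split=> [noS S beta card_S located | allS [S [beta [card_S located]]]].
  by apply/per_eq0_gt0 => // per_gt0; apply: noS; exists S, beta.
by rewrite allS ?ltxx.
Qed.
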